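(* Let $(G,+)$ be an abelian group with identity $e$, let $\mathsf{Dgm}$ be the set of all half-open intervals $[q,r)\subset\mathbb{R}$ with $q<r$ together with all half-infinite intervals $[q,\infty)$, and let $\varepsilon\ge 0$. Let $X:\mathsf{Dgm}\to G$ be a constructible map and let $Y:\mathsf{Dgm}\to G$ be a finite map such that $X(I)=\sum_{J\in\mathsf{Dgm}:\,J\supseteq I}Y(J)$ for each $I\in\mathsf{Dgm}$. Then $$X\circ\mathsf{Grow}^\varepsilon(I)=\sum_{J\in\mathsf{Dgm}:\,J\supseteq I} \big(Y\circ \mathsf{Grow}^\varepsilon\big)(J)\quad\text{for each } I\in\mathsf{Dgm}.$$
   Context: For a finite set $S\subset\mathbb{R}$, a map $X:\mathsf{Dgm}\to G$ is $S$-constructible if for all $J\supseteq I$ in $\mathsf{Dgm}$ with $J\cap S=I\cap S$, $X(I)=X(J)$; $X$ is constructible if it is $S$-constructible for some finite $S$. For $S=\{s_1<\dots<s_n\}$, a map $Y$ is $S$-finite if $Y(I)\ne e$ implies $I=[s_i,s_j)$ or $I=[s_i,\infty)$; $Y$ is finite if it is $S$-finite for some finite $S$. The map $\mathsf{Grow}^\varepsilon:\mathsf{Dgm}\to\mathsf{Dgm}$ sends $[p,q)$ to $[p-\varepsilon,q+\varepsilon)$ and $[p,\infty)$ to $[p-\varepsilon,\infty)$. *)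

From HB Require Import structures.
From mathcomp Require Import all_boot all_order all_algebra.
From mathcomp Require Import all_classical all_reals.
Set Implicit Arguments. Unset Strict Implicit. Unset Printing Implicit Defensive.
Import Order.TTheory GRing.Theory Num.Theory.
Local Open Scope ring_scope.

(* An element of Dgm is encoded by (left endpoint, right endpoint) where the
   right endpoint is [Some r] for [q, r) (with q < r) and [None] for [q, oo). *)
Definition dgm_wf {R : realType} (x : R * option R) : bool :=
  if x.2 is Some r then x.1 < r else true.

Definition Dgm (R : realType) := {x : R * option R | dgm_wf x}.

Definition dgm_left {R : realType} (I : Dgm R) : R := (val I).1.
Definition dgm_right {R : realType} (I : Dgm R) : option R := (val I).2.

Definition dgm_mem {R : realType} (I : Dgm R) (x : R) : bool :=
  (dgm_left I <= x) && (if dgm_right I is Some r then x < r else true).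

Definition dgm_sub {R : realType} (I J : Dgm R) : Prop :=
  forall x, dgm_mem I x -> dgm_mem J x.

Definition S_constructible {R : realType} {G : zmodType} (S : seq R)
    (X : Dgm R -> G) : Prop :=
  forall I J : Dgm R, dgm_sub I J ->
    (forall s, s \in S -> dgm_mem I s = dgm_mem J s) -> X I = X J.

Definition constructible {R : realType} {G : zmodType} (X : Dgm R -> G) : Prop :=
  exists S : seq R, S_constructible S X.

Definition S_finite {R : realType} {G : zmodType} (S : seq R)
    (Y : Dgm R -> G) : Prop :=
  forall I : Dgm R, Y I != 0 ->
    dgm_left I \in S /\ (if dgm_right I is Some r then r \in S else True).

Definition finite_map {R : realType} {G : zmodType} (Y : Dgm R -> G) : Prop :=
  exists S : seq R, S_finite S Y.

(* Grow^eps : [p,q) |-> [p-eps, q+eps), [p,oo) |-> [p-eps, oo).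
   (For eps >= 0 the result is always well formed; the default [I] of
   [insubd] is only used for eps < 0, which never occurs below.) *)
Definition grow {R : realType} (eps : R) (I : Dgm R) : Dgm R :=
  insubd I (dgm_left I - eps, omap (fun r => r + eps) (dgm_right I)).

Definition sum_supsets {R : realType} {G : zmodType} (F : Dgm R -> G)
    (I : Dgm R) : G :=
  (\sum_(J \in [set J : Dgm R | dgm_sub I J]) F J)%R.

(* Growing by eps is injective and satisfies I ⊆ J iff Grow I ⊆ Grow J;
   moreover every superset of Grow I is itself a grown interval.  Hence
   Grow^eps is a bijection from the supersets of I onto the supersets of
   Grow^eps I, and reindexing the defining sum of X (grow eps I) along it
   gives the claim. *)
From mathcomp Require Import all_boot all_order all_algebra.
From mathcomp Require Import all_classical all_reals.
From mathcomp Require Import lra.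
Set Implicit Arguments. Unset Strict Implicit. Unset Printing Implicit Defensive.
Import Order.TTheory GRing.Theory Num.Theory.
Local Open Scope classical_set_scope.
Local Open Scope ring_scope.

Section DgmInclusion.
Variable R : realType.

Definition dgm_right_le (b d : option R) : bool :=
  if d is Some d' then (if b is Some b' then b' <= d' else false) else true.

Lemma dgm_subP (I J : Dgm R) :
  dgm_sub I J <->
  dgm_left J <= dgm_left I /\ dgm_right_le (dgm_right I) (dgm_right J).
Proof.
case: I J => [[a oa] wfI] [[c oc] wfJ].
rewrite /dgm_sub /dgm_mem /dgm_left /dgm_right /=.
have memI_a : (if oa is Some b then a < b else true) = true by case: oa wfI.
split=> [sub_IJ | [ca right_le] x /andP[ax xr]].
- have := sub_IJ a; rewrite lexx memI_a => /(_ isT) /andP[ca _].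
  split=> //; case: oc wfJ sub_IJ => [d|] //= _ sub_IJ.
  (* if I reached beyond d, the point max a d would be in I but not in J *)
  have := sub_IJ (Num.max a d); rewrite le_max lexx gt_max ltxx andbF /=.
  case: oa wfI {memI_a} sub_IJ => [b|] /= wfI _; last by move/(_ isT); rewrite andbF.
  move: wfI; rewrite /dgm_wf gt_max /= => -> /=.
  by case: (leP b d) => // _ /(_ isT); rewrite andbF.
- rewrite (le_trans ca ax) /=.
  case: oc right_le {wfJ} => [d|] //; case: oa xr {wfI memI_a} => [b|] //= xb bd.
  exact: lt_le_trans xb bd.
Qed.

End DgmInclusion.

Section Grow.
Variables (R : realType) (eps : R).
Hypothesis eps_ge0 : 0 <= eps.

Lemma grow_val (I : Dgm R) :
  val (grow eps I) = (dgm_left I - eps, omap (fun r => r + eps) (dgm_right I)).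
Proof.
rewrite /grow insubdK // unfold_in /dgm_wf /=.
have := eps_ge0; case: I => [[a [b|]]] //=; rewrite /dgm_left /dgm_wf /=; lra.
Qed.

Lemma grow_left (I : Dgm R) : dgm_left (grow eps I) = dgm_left I - eps.
Proof. by rewrite /dgm_left grow_val. Qed.

Lemma grow_right (I : Dgm R) :
  dgm_right (grow eps I) = omap (fun r => r + eps) (dgm_right I).
Proof. by rewrite /dgm_right grow_val. Qed.

Lemma grow_inj : injective (grow eps).
Proof.
move=> [[a oa] wfI] [[c oc] wfJ] /(congr1 val); rewrite !grow_val.
rewrite /dgm_left /dgm_right /= => -[ac ob]; apply: val_inj => /=.
have -> : a = c by lra.
by case: oa oc ob {wfI wfJ} => [b|] [d|] //= [bd]; have -> : b = d by lra.
Qed.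

Lemma grow_sub (I J : Dgm R) : dgm_sub (grow eps I) (grow eps J) <-> dgm_sub I J.
Proof.
rewrite !dgm_subP grow_left grow_left !grow_right lerD2r.
by case: (dgm_right I) (dgm_right J) => [b|] [d|] //=; rewrite lerD2r.
Qed.

Lemma sub_grow_image (I K : Dgm R) :
  dgm_sub (grow eps I) K -> exists J, grow eps J = K.
Proof.
case/dgm_subP; rewrite grow_left grow_right.
case: I K => [[a oa] wfI] [[c oc] wfK]; rewrite /dgm_left /dgm_right /= => ca rle.
(* K ends at least 2 eps after it starts, so shrinking it by eps is legal *)
have wfJ : dgm_wf (c + eps, omap (fun r => r - eps) oc).
  case: oc rle {wfK} => [d|] //; case: oa wfI => [b|] //=.
  by rewrite /dgm_wf /= => ab bd; lra.
exists (exist (fun x => dgm_wf x) _ wfJ); apply: val_inj.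
rewrite grow_val /dgm_left /dgm_right /=.
by congr pair; [lra | case: (oc) => //= d; congr Some; lra].
Qed.

Lemma grow_supsets (I : Dgm R) :
  [set K | dgm_sub (grow eps I) K] = grow eps @` [set J | dgm_sub I J].
Proof.
apply/seteqP; split=> K /=.
- move=> sub_IK; have [J JK] := sub_grow_image sub_IK.
  by exists J => //; apply/grow_sub; rewrite JK.
- by move=> [J /grow_sub sub_IJ <-].
Qed.

End Grow.

Theorem proposition5p1 (R : realType) (G : zmodType) (eps : R)
    (X Y : Dgm R -> G) :
  0 <= eps ->
  constructible X ->
  finite_map Y ->
  (forall I : Dgm R, X I = sum_supsets Y I) ->
  forall I : Dgm R, X (grow eps I) = sum_supsets (fun J => Y (grow eps J)) I.
Proof.
move=> eps_ge0 _ _ X_sum I.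
rewrite X_sum /sum_supsets grow_supsets // fsbig_image //.
by move=> J J' _ _; apply: grow_inj.
Qed.
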